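(* For any basis term $b$ (i.e. a variable or an abstraction), any context $\Gamma$ and any type $T$ of the Scalar type system: if $\Gamma\vdash b:T$ then there exists a unit type $U$ such that $T\equiv U$.
   Context: Fix a commutative ring $(\mathcal{S},+,\times)$. Terms: $t,r ::= b \mid (t)\,r \mid \mathbf{0} \mid \alpha.t \mid t+r$, basis terms $b ::= x \mid \lambda x\,t$, modulo associativity and commutativity of $+$. Types: $T ::= U \mid \forall X.T \mid \alpha.T \mid \overline{0}$; unit types: $U ::= X \mid U\to T \mid \forall X.U$. Type variables are only substituted by unit types; $(\alpha.T)[U/X]=\alpha.T[U/X]$. Type equivalence $\equiv$ is the least congruence with $\alpha.\overline0\equiv\overline0$, $0.T\equiv\overline0$, $1.T\equiv T$, $\alpha.(\beta.T)\equiv(\alpha\times\beta).T$, $\forall X.\alpha.T\equiv\alpha.\forall X.T$. A context is a set of distinct term variables with unit types. Typing rules: (ax) $\Gamma,x:U\vdash x:U$; ($\equiv$) from $\Gamma\vdash t:T$ and $T\equiv S$ infer $\Gamma\vdash t:S$; ($\to_E$) from $\Gamma\vdash t:\alpha.(U\to T)$ and $\Gamma\vdash r:\beta.U$ infer $\Gamma\vdash (t)\,r:(\alpha\times\beta).T$; ($\to_I$) from $\Gamma,x:U\vdash t:T$ infer $\Gamma\vdash\lambda x\,t:U\to T$; ($\forall_E$) from $\Gamma\vdash t:\forall X.T$ infer $\Gamma\vdash t:T[U/X]$, $U$ unit; ($\forall_I$) from $\Gamma\vdash t:T$ with $X$ not free in $\Gamma$ infer $\Gamma\vdash t:\forall X.T$;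 ($ax_{\overline0}$) $\Gamma\vdash\mathbf 0:\overline0$; ($+_I$) from $\Gamma\vdash t:\alpha.T$ and $\Gamma\vdash r:\beta.T$ infer $\Gamma\vdash t+r:(\alpha+\beta).T$; ($s_I$) from $\Gamma\vdash t:T$ infer $\Gamma\vdash\alpha.t:\alpha.T$. *)

(* the scalar ring S is an arbitrary commutative ring
   (comPzRingType: commutative, possibly trivial). *)
From mathcomp Require Import all_boot all_algebra.
From Stdlib Require List.
Set Implicit Arguments.
Unset Strict Implicit.
Unset Printing Implicit Defensive.
Import GRing.Theory.
Local Open Scope ring_scope.

(* Types (raw syntax).  Type variables are de Bruijn indices;         *)
(* TAll binds index 0.  The grammar restrictions (arrow domains are   *)
(* unit types) are imposed by the predicate [wf_type].                *)
Inductive stype (R : comPzRingType) : Type :=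
| TVar : nat -> stype R
| TArr : stype R -> stype R -> stype R
| TAll : stype R -> stype R
| TScal : R -> stype R -> stype R
| TZero : stype R.
Arguments TVar {R}.
Arguments TZero {R}.

Inductive is_unit (R : comPzRingType) : stype R -> Prop :=
| UVar n : is_unit (TVar n)
| UArr U T : is_unit (TArr U T)
| UAll U : is_unit U -> is_unit (TAll U).

Inductive wf_type (R : comPzRingType) : stype R -> Prop :=
| WVar n : wf_type (TVar n)
| WArr U T : is_unit U -> wf_type U -> wf_type T -> wf_type (TArr U T)
| WAll T : wf_type T -> wf_type (TAll T)
| WScal a T : wf_type T -> wf_type (TScal a T)
| WZero : wf_type (@TZero R).

Fixpoint tshift (R : comPzRingType) (c : nat) (T : stype R) : stype R :=
  match T with
  | TVar n => TVar (if (c <= n)%N then n.+1 else n)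
  | TArr A B => TArr (tshift c A) (tshift c B)
  | TAll A => TAll (tshift c.+1 A)
  | TScal a A => TScal a (tshift c A)
  | TZero => TZero
  end.

Fixpoint tsubst (R : comPzRingType) (k : nat) (U : stype R) (T : stype R)
  : stype R :=
  match T with
  | TVar n => if (n < k)%N then TVar n
              else if n == k then iter k (tshift 0) U
              else TVar n.-1
  | TArr A B => TArr (tsubst k U A) (tsubst k U B)
  | TAll A => TAll (tsubst k.+1 U A)
  | TScal a A => TScal a (tsubst k U A)
  | TZero => TZero
  end.

Inductive teq (R : comPzRingType) : stype R -> stype R -> Prop :=
| teq_refl T : teq T T
| teq_sym T S : teq T S -> teq S T
| teq_trans T S V : teq T S -> teq S V -> teq T V
| teq_arr A A' B B' : teq A A' -> teq B B' -> teq (TArr A B) (TArr A' B')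
| teq_all A A' : teq A A' -> teq (TAll A) (TAll A')
| teq_scal a A A' : teq A A' -> teq (TScal a A) (TScal a A')
| teq_scal_zero a : teq (TScal a TZero) TZero
| teq_zero_scal T : teq (TScal 0 T) TZero
| teq_one_scal T : teq (TScal 1 T) T
| teq_scal_scal a b T : teq (TScal a (TScal b T)) (TScal (a * b) T)
| teq_all_scal a T : teq (TAll (TScal a T)) (TScal a (TAll T)).

(* Terms, with named term variables (nat).                            *)
Inductive term (R : comPzRingType) : Type :=
| Var : nat -> term R
| Lam : nat -> term R -> term R
| App : term R -> term R -> term R
| Zero : term R
| Scal : R -> term R -> term R
| Plus : term R -> term R -> term R.
Arguments Var {R}.
Arguments Zero {R}.

Definition is_basis (R : comPzRingType) (b : term R) : Prop :=
  match b with Var _ | Lam _ _ => True | _ => False end.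

Inductive term_ac (R : comPzRingType) : term R -> term R -> Prop :=
| ac_refl t : term_ac t t
| ac_sym t r : term_ac t r -> term_ac r t
| ac_trans t r s : term_ac t r -> term_ac r s -> term_ac t s
| ac_comm t r : term_ac (Plus t r) (Plus r t)
| ac_assoc t r s : term_ac (Plus t (Plus r s)) (Plus (Plus t r) s)
| ac_lam x t t' : term_ac t t' -> term_ac (Lam x t) (Lam x t')
| ac_app t t' r r' : term_ac t t' -> term_ac r r' -> term_ac (App t r) (App t' r')
| ac_scal a t t' : term_ac t t' -> term_ac (Scal a t) (Scal a t')
| ac_plus t t' r r' : term_ac t t' -> term_ac r r' -> term_ac (Plus t r) (Plus t' r').

Definition ctx (R : comPzRingType) := list (nat * stype R).

Definition wf_ctx (R : comPzRingType) (G : ctx R) : Prop :=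
  List.NoDup (List.map fst G) /\
  (forall x U, List.In (x, U) G -> is_unit U /\ wf_type U).

(* shifting the context when going under a type binder (de Bruijn
   rendering of the side condition "X not free in Gamma") *)
Definition ctx_shift (R : comPzRingType) (G : ctx R) : ctx R :=
  List.map (fun p => (p.1, tshift 0 p.2)) G.

Inductive has_type (R : comPzRingType) : ctx R -> term R -> stype R -> Prop :=
| ty_ax G x U : List.In (x, U) G -> has_type G (Var x) U
| ty_equiv G t T S : has_type G t T -> teq T S -> wf_type S -> has_type G t S
| ty_arrE G t r a b U T :
    has_type G t (TScal a (TArr U T)) -> has_type G r (TScal b U) ->
    has_type G (App t r) (TScal (a * b) T)
| ty_arrI G x U t T :
    ~ List.In x (List.map fst G) -> is_unit U -> wf_type U ->
    has_type ((x, U) :: G) t T -> has_type G (Lam x t) (TArr U T)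
| ty_allE G t T U :
    has_type G t (TAll T) -> is_unit U -> wf_type U ->
    has_type G t (tsubst 0 U T)
| ty_allI G t T : has_type (ctx_shift G) t T -> has_type G t (TAll T)
| ty_ax0 G : has_type G Zero TZero
| ty_plusI G t r a b T :
    has_type G t (TScal a T) -> has_type G r (TScal b T) ->
    has_type G (Plus t r) (TScal (a + b) T)
| ty_sI G a t T : has_type G t T -> has_type G (Scal a t) (TScal a T)
| ty_ac G t t' T : term_ac t t' -> has_type G t T -> has_type G t' T.

(* Every type T is equivalent to (tscalar T).(tunit_part T), where tscalar T
   is the product of the scalars occurring in T and tunit_part T is a unit
   type; tscalar is an invariant of type equivalence.  Typing a variable or
   an abstraction produces a type of scalar 1, and the rules that can still
   apply afterwards (equivalence, forall-introduction and -elimination,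
   rearranging the term modulo AC) keep that scalar at 1.  Hence
   T == 1.(tunit_part T) == tunit_part T. *)
From mathcomp Require Import all_boot all_algebra.
From Stdlib Require List.
Import GRing.Theory.

Set Implicit Arguments.
Unset Strict Implicit.
Unset Printing Implicit Defensive.

Local Open Scope ring_scope.

Section UnitPart.

Variable R : comPzRingType.
Implicit Types (T U A B : stype R) (G : ctx R) (t : term R).

Fixpoint tscalar T : R :=
  match T with
  | TVar _ | TArr _ _ => 1
  | TAll A => tscalar A
  | TScal a A => a * tscalar A
  | TZero => 0
  end.

(* TZero is 0.X for any unit type X; we pick the variable 0. *)
Fixpoint tunit_part T : stype R :=
  match T with
  | TAll A => TAll (tunit_part A)
  | TScal _ A => tunit_part A
  | TZero => TVar 0
  | T => T
  end.

Lemma tscalar_unit U : is_unit U -> tscalar U = 1.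
Proof. by elim. Qed.

Lemma tscalar_teq A B : teq A B -> tscalar A = tscalar B.
Proof.
elim=> //= *; try congruence.
- by rewrite mulr0.
- by rewrite mul0r.
- by rewrite mul1r.
- by rewrite mulrA.
Qed.

Lemma tunit_part_unit T : is_unit (tunit_part T).
Proof. by elim: T => //= *; constructor. Qed.

Lemma tunit_part_wf T : wf_type T -> wf_type (tunit_part T).
Proof. by elim=> //= *; constructor. Qed.

Lemma teq_tscalar_tunit_part T : teq T (TScal (tscalar T) (tunit_part T)).
Proof.
elim: T => [n|A _ B _|A eA|a A eA|] /=.
- exact/teq_sym/teq_one_scal.
- exact/teq_sym/teq_one_scal.
- exact: teq_trans (teq_all eA) (teq_all_scal _ _).
- exact: teq_trans (teq_scal a eA) (teq_scal_scal _ _ _).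
- exact/teq_sym/teq_zero_scal.
Qed.

Lemma teq_tunit_part T : tscalar T = 1 -> teq T (tunit_part T).
Proof.
move=> T1; apply: teq_trans (teq_tscalar_tunit_part T) _.
by rewrite T1; apply: teq_one_scal.
Qed.

End UnitPart.

Section Substitution.

Variable R : comPzRingType.
Implicit Types (T U A : stype R).

Lemma tshift_unit U c : is_unit U -> is_unit (tshift c U).
Proof. by move=> uU; elim: uU c => /= *; constructor. Qed.

Lemma tshift_wf U c : wf_type U -> wf_type (tshift c U).
Proof. by move=> wU; elim: wU c => /= *; constructor=> //; apply: tshift_unit. Qed.

Lemma iter_tshift_unit U k : is_unit U -> is_unit (iter k (tshift 0) U).
Proof. by move=> uU; elim: k => //= k; apply: tshift_unit. Qed.

Lemma iter_tshift_wf U k : wf_type U -> wf_type (iter k (tshift 0) U).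
Proof. by move=> wU; elim: k => //= k; apply: tshift_wf. Qed.

Lemma tsubst_unit U A k : is_unit U -> is_unit A -> is_unit (tsubst k U A).
Proof.
move=> uU uA; elim: uA k => /= [n|B T|B _ IH] k; try by constructor.
case: ifP => _; first constructor.
by case: ifP => _; [apply: iter_tshift_unit | constructor].
Qed.

Lemma tsubst_wf U A k :
  is_unit U -> wf_type U -> wf_type A -> wf_type (tsubst k U A).
Proof.
move=> uU wU wA; elim: wA k => /= [n|B T uB _ IHB _ IHT|T _ IH|a T _ IH|] k;
  try by constructor.
- case: ifP => _; first constructor.
  by case: ifP => _; [apply: iter_tshift_wf | constructor].
- by constructor=> //; apply: tsubst_unit.
Qed.

Lemma tscalar_tsubst U A k : is_unit U -> tscalar (tsubst k U A) = tscalar A.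
Proof.
move=> uU; elim: A k => [n|A _ B _|A IH|a A IH|] k //=; last by rewrite IH.
by do 2![case: ifP => _ //]; apply/tscalar_unit/iter_tshift_unit.
Qed.

End Substitution.

Section Typing.

Variable R : comPzRingType.
Implicit Types (T U : stype R) (G : ctx R) (t : term R).

Lemma term_ac_basis t t' : term_ac t t' -> is_basis t -> is_basis t'.
Proof.
move=> ac; suff: is_basis t <-> is_basis t' by case.
by elim: ac => //=; intuition.
Qed.

Lemma in_ctx_shift G x U :
  List.In (x, U) (ctx_shift G) -> exists2 V, List.In (x, V) G & U = tshift 0 V.
Proof. by case/List.in_map_iff=> [[y V] [[-> <-] inG]]; exists V. Qed.

Lemma wf_ctx_shift G : wf_ctx G -> wf_ctx (ctx_shift G).
Proof.
move=> [nodup wfG]; split.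
- by rewrite /ctx_shift List.map_map.
- move=> x U /in_ctx_shift[V /wfG[uV wV] ->].
  by split; [apply: tshift_unit | apply: tshift_wf].
Qed.

Lemma has_type_wf G t T : has_type G t T -> wf_ctx G -> wf_type T.
Proof.
elim=> {G t T}; try by move=> *; constructor; auto.
- by move=> G x U inG [_ wfG]; case: (wfG _ _ inG).
- by [].
- move=> G t r a b U T _ IH _ _ wfG.
  have wScal := IH wfG; inversion wScal as [| | |? ? wArr|].
  by inversion wArr; constructor.
- move=> G x U t T xG uU wU _ IH [nodup wfG]; constructor=> //.
  apply: IH; split; first by constructor.
  by move=> y V /= [[_ <-] | /wfG].
- move=> G t T U _ IH uU wU /IH wAll.
  by inversion wAll; apply: tsubst_wf.
- by move=> G t T _ IH /wf_ctx_shift/IH; constructor.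
- by move=> G t r a b T _ IH _ _ /IH wT; inversion wT; constructor.
- by [].
Qed.

Lemma has_type_basis_tscalar G t T :
  has_type G t T -> is_basis t ->
  (forall x U, List.In (x, U) G -> is_unit U) -> tscalar T = 1.
Proof.
elim=> {G t T} //.
- by move=> G x U inG _ uG; apply: tscalar_unit (uG _ _ inG).
- by move=> G t T S _ IH eTS _ bt uG; rewrite -(tscalar_teq eTS) IH.
- by move=> G t T U _ IH uU _ bt uG; rewrite tscalar_tsubst //; apply: IH.
- move=> G t T _ IH bt uG; apply: IH => // x U /in_ctx_shift[V inG ->].
  exact/tshift_unit/(uG _ _ inG).
- by move=> G t t' T ac _ IH bt' uG; apply: IH => //; exact: term_ac_basis (ac_sym ac) bt'.
Qed.

End Typing.

Theorem mainTheorem14 (R : comPzRingType) (G : ctx R) (b : term R) (T : stype R) :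
  is_basis b -> wf_ctx G -> has_type G b T ->
  exists U : stype R, is_unit U /\ wf_type U /\ teq T U.
Proof.
move=> bb wfG bT.
have T1 : tscalar T = 1.
  by apply: (has_type_basis_tscalar bT bb) => x U /(proj2 wfG) [].
exists (tunit_part T); split; first exact: tunit_part_unit.
split; first exact/tunit_part_wf/(has_type_wf bT).
exact: teq_tunit_part.
Qed.
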